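(* One has $$[4;\overline{4}]+[0;3,\overline{1,3,1,2}]=\frac92=[3;1,3,\overline{4}]+[0;\overline{1,2,1,3}].$$ In particular, $$\frac92=m(\overline{4}\,3\,\overline{1312})=\lim_{n\to\infty}m\big(\overline{4^n\,3\,(1312)^n\,1313}\big)\in L\cap\mathbb{Q}.$$
   Context: Overlines in continued fractions denote infinite periodic repetition of the indicated block. $\overline{4}\,3\,\overline{1312}$ denotes the bi-infinite sequence $\dots4443131213121312\dots$ (all $4$'s to the left of a single $3$, followed by periodic repetition of $1312$), and $\overline{4^n3(1312)^n1313}$ denotes the bi-infinite periodic sequence obtained by repeating the finite block consisting of $n$ copies of $4$, then $3$, then $n$ copies of $1312$, then $1313$. For $\underline a\in(\mathbb{N}^* )^{\mathbb{Z}}$, $\lambda_0(\underline a)=[a_0;a_1,\dots]+[0;a_{-1},a_{-2},\dots]$, $m(\underline a)=\sup_n\lambda_0(\sigma^n\underline a)$ with $\sigma$ the left shift, and $L=\{\limsup_{n\to\infty}\lambda_0(\sigma^n\underline a):\underline a\in(\mathbb{N}^* )^{\mathbb{Z}}\}$ is the Lagrange spectrum. *)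

From Stdlib Require Import Reals ZArith List Lra.
From Coquelicot Require Import Coquelicot.
Import ListNotations.
Open Scope R_scope.

Fixpoint cf_fin (n : nat) (a : nat -> nat) : R :=
  match n with
  | O => INR (a O)
  | S n' => INR (a O) + / cf_fin n' (fun k => a (S k))
  end.

(* Infinite continued fraction [a_0; a_1, a_2, ...] := limit of the convergents
   (which exists whenever a_k >= 1 for k >= 1). *)
Definition cf (a : nat -> nat) : R := real (Lim_seq (fun n => cf_fin n a)).

Definition shiftZ (n : Z) (a : Z -> nat) : Z -> nat := fun i => a (i + n)%Z.

(* lambda_0(a) = [a_0; a_1, ...] + [0; a_{-1}, a_{-2}, ...]
   where [0; b_1, b_2, ...] = 1 / [b_1; b_2, ...]. *)
Definition lambda0 (a : Z -> nat) : R :=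
  cf (fun k => a (Z.of_nat k)) + / cf (fun k => a (- Z.of_nat k - 1)%Z).

Definition mval (a : Z -> nat) : Rbar :=
  Lub_Rbar (fun x => exists n : Z, x = lambda0 (shiftZ n a)).

Definition in_Lagrange (x : R) : Prop :=
  exists a : Z -> nat, (forall i, (0 < a i)%nat) /\
    LimSup_seq (fun n : nat => lambda0 (shiftZ (Z.of_nat n) a)) = Finite x.

(* Periodic extension of a finite block b (indexed so that position 0 is b_0). *)
Definition periodic (b : list nat) : Z -> nat :=
  fun i => nth (Z.to_nat (i mod Z.of_nat (length b))) b 1%nat.

Definition block (n : nat) : list nat :=
  repeat 4%nat n ++ [3%nat] ++ concat (repeat [1;3;1;2]%nat n) ++ [1;3;1;3]%nat.

(* The sequence  ...444 3 131213121312...  (3 at position 0). *)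
Definition seq43 : Z -> nat :=
  fun i => if (i <? 0)%Z then 4%nat
           else if (i =? 0)%Z then 3%nat
           else nth (Z.to_nat ((i - 1) mod 4)) [1;3;1;2]%nat 1%nat.

Definition all4 : nat -> nat := fun _ => 4%nat.
Definition s3_1312 : nat -> nat :=
  fun k => match k with O => 3%nat | S j => nth (j mod 4) [1;3;1;2]%nat 1%nat end.
Definition s313_4 : nat -> nat :=
  fun k => match k with O => 3%nat | 1 => 1%nat | 2 => 3%nat | _ => 4%nat end.
Definition s1213 : nat -> nat := fun k => nth (k mod 4) [1;2;1;3]%nat 1%nat.

From Stdlib Require Import Reals ZArith List Lia Lra FunctionalExtensionality.
From Coquelicot Require Import Coquelicot.
Import ListNotations.
Open Scope R_scope.

(* Two steps of the continued fraction algorithm contract distances by a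
   factor 4, so [lambda0] at a position is determined up to [O(2^-K)] by the
   [K] neighbouring partial quotients. In [...444 3 131213121312...] a check
   position by position gives [lambda0 <= 9/2], with equality at the 4 before
   the 3 and at the 3 after it; the two equalities are the identities
   [[4; 4bar] + [0; 3, (1312)bar] = 9/2 = [3; 1, 3, 4bar] + [0; (1213)bar]],
   computed with [[4; 4bar] = 2 + sqrt 5]. The word (1312)^Z is a palindrome
   around each of its 3's, so within distance [K] of any position of a block
   [4^n 3 (1312)^n 1313], with [n >= 2K + 1], the neighbouring blocks read as
   that sequence or its mirror image. Hence [lambda0 <= 9/2 + O(2^-K)] on the
   whole block, while [lambda0 >= 9/2 - O(2^-K)] two places after its 3. This
   gives the limit of the Markov values of the periodic sequences and, for the
   concatenation of the blocks with n = 0, 1, 2, ..., the limsup 9/2. *)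

(** * Continued fractions with positive partial quotients *)

Definition positive_seq (a : nat -> nat) : Prop := forall k, (0 < a k)%nat.

Definition stail (a : nat -> nat) : nat -> nat := fun k => a (S k).

Lemma positive_stail a : positive_seq a -> positive_seq (stail a).
Proof. intros Ha k; apply Ha. Qed.

Lemma INR_ge_1 n : (0 < n)%nat -> 1 <= INR n.
Proof. intros Hn; apply (le_INR 1); lia. Qed.

Lemma cf_fin_bounds n : forall a, positive_seq a ->
  INR (a 0%nat) <= cf_fin n a <= INR (a 0%nat) + 1.
Proof.
  induction n as [|n IH]; intros a Ha; simpl; [lra|].
  pose proof (IH (stail a) (positive_stail a Ha)) as Htl.
  pose proof (INR_ge_1 _ (Ha 1%nat)) as H1; unfold stail in *.
  assert (0 < / cf_fin n (fun k => a (S k)) <= 1).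
  { split; [apply Rinv_0_lt_compat; lra|].
    rewrite <- Rinv_1; apply Rinv_le_contravar; lra. }
  lra.
Qed.

(* [/ (c + / u) = u / (c u + 1)] and [c u + 1 >= 2]. *)
Lemma inv_add_inv_contract c u v : 1 <= c -> 1 <= u -> 1 <= v ->
  Rabs (/ (c + / u) - / (c + / v)) <= Rabs (u - v) / 4.
Proof.
  intros Hc Hu Hv.
  assert (Hcu : 2 <= c * u + 1) by nra.
  assert (Hcv : 2 <= c * v + 1) by nra.
  replace (/ (c + / u) - / (c + / v)) with ((u - v) / ((c * u + 1) * (c * v + 1))).
  2: field; repeat split; lra.
  unfold Rdiv; rewrite Rabs_mult, Rabs_inv, (Rabs_pos_eq (_ * _)) by nra.
  apply Rmult_le_compat_l; [apply Rabs_pos|].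
  apply Rinv_le_contravar; nra.
Qed.

Lemma cf_fin_close K : forall a b n m, positive_seq a -> positive_seq b ->
  (forall k, (k <= K)%nat -> a k = b k) -> (K <= n)%nat -> (K <= m)%nat ->
  Rabs (cf_fin n a - cf_fin m b) <= 2 * (1/2) ^ K.
Proof.
  induction K as [K IH] using lt_wf_ind; intros a b n m Ha Hb Hab Hn Hm.
  destruct (Nat.le_gt_cases K 1) as [HK|HK].
  - pose proof (cf_fin_bounds n a Ha); pose proof (cf_fin_bounds m b Hb).
    rewrite (Hab 0%nat) in * by lia.
    assert (2 * (1/2) ^ K >= 1) by (destruct K as [|[|]]; simpl; lia || lra).
    apply Rabs_le; lra.
  - destruct n as [|[|n]]; [lia|lia|]; destruct m as [|[|m]]; [lia|lia|].
    pose proof (IH (K - 2)%nat ltac:(lia) (stail (stail a)) (stail (stail b)) n m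
      (positive_stail _ (positive_stail _ Ha)) (positive_stail _ (positive_stail _ Hb))
      ltac:(intros k Hk; apply Hab; lia) ltac:(lia) ltac:(lia)) as Hrec.
    pose proof (cf_fin_bounds n _ (positive_stail _ (positive_stail _ Ha))).
    pose proof (cf_fin_bounds m _ (positive_stail _ (positive_stail _ Hb))).
    pose proof (INR_ge_1 _ (Ha 1%nat)); pose proof (INR_ge_1 _ (Ha 2%nat)).
    pose proof (INR_ge_1 _ (Hb 2%nat)).
    change (cf_fin (S (S n)) a) with
      (INR (a 0%nat) + / (INR (a 1%nat) + / cf_fin n (stail (stail a)))).
    change (cf_fin (S (S m)) b) with
      (INR (b 0%nat) + / (INR (b 1%nat) + / cf_fin m (stail (stail b)))).
    unfold stail in *; rewrite <- (Hab 0%nat), <- (Hab 1%nat) by lia.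
    match goal with |- Rabs (?x + ?p - (?x + ?q)) <= _ =>
      replace (x + p - (x + q)) with (p - q) by ring end.
    eapply Rle_trans; [apply inv_add_inv_contract; lra|].
    replace K with (S (S (K - 2))) by lia; simpl pow; lra.
Qed.

Lemma cf_is_lim a : positive_seq a -> is_lim_seq (fun n => cf_fin n a) (cf a).
Proof.
  intros Ha.
  assert (Hex : ex_finite_lim_seq (fun n => cf_fin n a)).
  { apply ex_lim_seq_cauchy_corr; intros eps.
    destruct (pow_lt_1_zero (1/2) ltac:(rewrite Rabs_pos_eq; lra) (eps / 2)
      ltac:(pose proof (cond_pos eps); lra)) as [N HN].
    exists N; intros n m Hn Hm.
    specialize (HN N (le_n N)); rewrite Rabs_pos_eq in HN by (apply pow_le; lra).
    eapply Rle_lt_trans; [apply (cf_fin_close N); auto|lra]. }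
  apply ex_finite_lim_seq_correct in Hex as [Hlim Hfin].
  unfold cf; rewrite Hfin; apply Lim_seq_correct, Hlim.
Qed.

Lemma cf_bounds a : positive_seq a -> INR (a 0%nat) <= cf a <= INR (a 0%nat) + 1.
Proof.
  intros Ha; pose proof (cf_is_lim a Ha) as Hlim; split.
  - apply (is_lim_seq_le (fun _ => INR (a 0%nat)) _ _ _ (fun n => proj1 (cf_fin_bounds n a Ha))
      (is_lim_seq_const _) Hlim).
  - apply (is_lim_seq_le _ (fun _ => INR (a 0%nat) + 1) _ _ (fun n => proj2 (cf_fin_bounds n a Ha))
      Hlim (is_lim_seq_const _)).
Qed.

Lemma cf_ge_1 a : positive_seq a -> 1 <= cf a.
Proof. intros Ha; pose proof (cf_bounds a Ha); pose proof (INR_ge_1 _ (Ha 0%nat)); lra. Qed.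

Lemma inv_cf_bounds a : positive_seq a -> 0 < / cf a <= 1.
Proof.
  intros Ha; pose proof (cf_ge_1 a Ha); split; [apply Rinv_0_lt_compat; lra|].
  rewrite <- Rinv_1; apply Rinv_le_contravar; lra.
Qed.

Lemma cf_unfold a : positive_seq a -> cf a = INR (a 0%nat) + / cf (stail a).
Proof.
  intros Ha.
  pose proof (proj1 (is_lim_seq_incr_1 _ _) (cf_is_lim a Ha)) as Hcf.
  assert (Hunf : is_lim_seq (fun n => cf_fin (S n) a) (INR (a 0%nat) + / cf (stail a))).
  { apply is_lim_seq_plus'; [apply is_lim_seq_const|].
    apply (is_lim_seq_inv _ (cf (stail a))); [apply cf_is_lim, positive_stail, Ha|].
    intros [= E]; pose proof (cf_ge_1 _ (positive_stail a Ha)); lra. }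
  apply is_lim_seq_unique in Hcf, Hunf; rewrite Hcf in Hunf; now injection Hunf.
Qed.

Lemma cf_close K a b : positive_seq a -> positive_seq b ->
  (forall k, (k <= K)%nat -> a k = b k) -> Rabs (cf a - cf b) <= 2 * (1/2) ^ K.
Proof.
  intros Ha Hb Hab.
  apply (is_lim_seq_le_loc (fun n => Rabs (cf_fin n a - cf_fin n b)) (fun _ => 2 * (1/2) ^ K)
    (Rabs (cf a - cf b)) (2 * (1/2) ^ K)).
  - exists K; intros n Hn; apply cf_fin_close; auto.
  - apply (is_lim_seq_abs _ (cf a - cf b)), is_lim_seq_minus'; apply cf_is_lim; auto.
  - apply is_lim_seq_const.
Qed.

Lemma inv_cf_close K a b : positive_seq a -> positive_seq b ->
  (forall k, (k <= K)%nat -> a k = b k) -> Rabs (/ cf a - / cf b) <= 2 * (1/2) ^ K.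
Proof.
  intros Ha Hb Hab; pose proof (cf_ge_1 a Ha); pose proof (cf_ge_1 b Hb).
  eapply Rle_trans; [|apply (cf_close K a b Ha Hb Hab)].
  replace (/ cf a - / cf b) with ((cf b - cf a) / (cf a * cf b)) by (field; lra).
  unfold Rdiv; rewrite Rabs_mult, Rabs_inv, (Rabs_pos_eq (_ * _)) by nra.
  rewrite <- Rabs_Ropp, Ropp_minus_distr, <- Rmult_1_r.
  apply Rmult_le_compat_l; [apply Rabs_pos|].
  rewrite <- Rinv_1; apply Rinv_le_contravar; nra.
Qed.

(** * The function [lambda0] *)

Definition positiveZ (a : Z -> nat) : Prop := forall i, (0 < a i)%nat.

Definition fwd (a : Z -> nat) (p : Z) : nat -> nat := fun k => a (Z.of_nat k + p)%Z.
Definition bwd (a : Z -> nat) (p : Z) : nat -> nat := fun k => a (- Z.of_nat k - 1 + p)%Z.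

Lemma positive_fwd a p : positiveZ a -> positive_seq (fwd a p).
Proof. intros Ha k; apply Ha. Qed.

Lemma positive_bwd a p : positiveZ a -> positive_seq (bwd a p).
Proof. intros Ha k; apply Ha. Qed.

Lemma lambda0_shiftZ a p : lambda0 (shiftZ p a) = cf (fwd a p) + / cf (bwd a p).
Proof. reflexivity. Qed.

Lemma lambda0_unfold a p : positiveZ a ->
  lambda0 (shiftZ p a) = INR (a p) + / cf (fwd a (p + 1)) + / cf (bwd a p).
Proof.
  intros Ha; rewrite lambda0_shiftZ, (cf_unfold (fwd a p)) by apply positive_fwd, Ha.
  assert (Htl : stail (fwd a p) = fwd a (p + 1)).
  { apply functional_extensionality; intros k; unfold stail, fwd; f_equal; lia. }
  rewrite Htl; reflexivity.
Qed.

Lemma lambda0_reflect a p : positiveZ a ->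
  lambda0 (shiftZ (- p) (fun i => a (- i)%Z)) = lambda0 (shiftZ p a).
Proof.
  intros Ha; rewrite lambda0_unfold, (lambda0_unfold a) by (intros i; apply Ha).
  replace (a (- - p)%Z) with (a p) by (f_equal; lia).
  rewrite Rplus_assoc, Rplus_assoc, (Rplus_comm (/ cf _)).
  do 4 f_equal; apply functional_extensionality; intros k; unfold fwd, bwd; f_equal; lia.
Qed.

Lemma lambda0_le_head a p : positiveZ a -> lambda0 (shiftZ p a) <= INR (a p) + 2.
Proof.
  intros Ha; rewrite lambda0_unfold by exact Ha.
  pose proof (inv_cf_bounds _ (positive_fwd a (p + 1) Ha)).
  pose proof (inv_cf_bounds _ (positive_bwd a p Ha)); lra.
Qed.

Lemma lambda0_close K a b p q : positiveZ a -> positiveZ b ->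
  (forall i, (- Z.of_nat K - 1 <= i <= Z.of_nat K)%Z -> a (p + i)%Z = b (q + i)%Z) ->
  Rabs (lambda0 (shiftZ p a) - lambda0 (shiftZ q b)) <= 4 * (1/2) ^ K.
Proof.
  intros Ha Hb Hab; rewrite !lambda0_shiftZ.
  pose proof (cf_close K (fwd a p) (fwd b q) (positive_fwd a p Ha) (positive_fwd b q Hb)
    ltac:(intros k Hk; unfold fwd; rewrite !(Z.add_comm (Z.of_nat k)); apply Hab; lia)).
  pose proof (inv_cf_close K (bwd a p) (bwd b q) (positive_bwd a p Ha) (positive_bwd b q Hb)
    ltac:(intros k Hk; unfold bwd; rewrite !(Z.add_comm (- Z.of_nat k - 1)); apply Hab; lia)).
  replace (cf (fwd a p) + / cf (bwd a p) - (cf (fwd b q) + / cf (bwd b q)))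
    with ((cf (fwd a p) - cf (fwd b q)) + (/ cf (bwd a p) - / cf (bwd b q))) by ring.
  eapply Rle_trans; [apply Rabs_triang|lra].
Qed.

Lemma lambda0_le_of_agree K a b c q lo hi M : positiveZ a -> positiveZ b ->
  (forall j, (lo <= j <= hi)%Z -> a (c + j)%Z = b j) ->
  (lo <= q - Z.of_nat K - 1)%Z -> (q + Z.of_nat K <= hi)%Z ->
  lambda0 (shiftZ q b) <= M -> lambda0 (shiftZ (c + q) a) <= M + 4 * (1/2) ^ K.
Proof.
  intros Ha Hb Hab Hlo Hhi HM.
  pose proof (lambda0_close K a b (c + q) q Ha Hb
    ltac:(intros i Hi; rewrite <- Z.add_assoc; apply Hab; lia)) as Hclose.
  apply Rabs_le_between in Hclose; lra.
Qed.

Lemma lambda0_ge_of_agree K a b c q lo hi M : positiveZ a -> positiveZ b ->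
  (forall j, (lo <= j <= hi)%Z -> a (c + j)%Z = b j) ->
  (lo <= q - Z.of_nat K - 1)%Z -> (q + Z.of_nat K <= hi)%Z ->
  M <= lambda0 (shiftZ q b) -> M - 4 * (1/2) ^ K <= lambda0 (shiftZ (c + q) a).
Proof.
  intros Ha Hb Hab Hlo Hhi HM.
  pose proof (lambda0_close K a b (c + q) q Ha Hb
    ltac:(intros i Hi; rewrite <- Z.add_assoc; apply Hab; lia)) as Hclose.
  apply Rabs_le_between in Hclose; lra.
Qed.

Lemma mval_between a m M p0 : (forall p, lambda0 (shiftZ p a) <= M) ->
  m <= lambda0 (shiftZ p0 a) -> exists v, mval a = Finite v /\ m <= v <= M.
Proof.
  intros HM Hm; unfold mval.
  destruct (Lub_Rbar_correct (fun x => exists n : Z, x = lambda0 (shiftZ n a))) as [Hub Hlub].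
  assert (Hge : Rbar_le (lambda0 (shiftZ p0 a)) (Lub_Rbar (fun x => exists n, x = lambda0 (shiftZ n a))))
    by (apply Hub; eauto).
  assert (Hle : Rbar_le (Lub_Rbar (fun x => exists n, x = lambda0 (shiftZ n a))) M)
    by (apply Hlub; intros x [n ->]; apply HM).
  destruct (Lub_Rbar _) as [v| |]; simpl in Hge, Hle; try contradiction.
  exists v; split; [reflexivity|lra].
Qed.

Lemma fwd_0 a p : fwd a p 0 = a p.
Proof. reflexivity. Qed.

Lemma fwd_1 a p : fwd a p 1 = a (p + 1)%Z.
Proof. unfold fwd; f_equal; lia. Qed.

Lemma bwd_0 a p : bwd a p 0 = a (p - 1)%Z.
Proof. unfold bwd; f_equal; lia. Qed.

Lemma bwd_1 a p : bwd a p 1 = a (p - 2)%Z.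
Proof. unfold bwd; f_equal; lia. Qed.

Lemma inv_cf_le_inv_head b : positive_seq b -> / cf b <= / INR (b 0%nat).
Proof.
  intros Hb; pose proof (cf_bounds b Hb); pose proof (INR_ge_1 _ (Hb 0%nat)).
  apply Rinv_le_contravar; lra.
Qed.

Lemma inv_cf_le_3_4 b : positive_seq b -> b 0%nat = 1%nat -> (b 1%nat <= 2)%nat ->
  / cf b <= 3/4.
Proof.
  intros Hb H0 H1; rewrite cf_unfold, H0 by exact Hb.
  pose proof (cf_bounds _ (positive_stail b Hb)) as Htl; unfold stail in Htl.
  pose proof (INR_ge_1 _ (Hb 1%nat)); apply le_INR in H1; simpl in H1.
  assert (/ 3 <= / cf (stail b)) by (apply Rinv_le_contravar; unfold stail; lra).
  replace (3/4) with (/ (4/3)) by field; apply Rinv_le_contravar; simpl; lra.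
Qed.

Lemma lambda0_le_444 a p : positiveZ a ->
  a (p - 1)%Z = 4%nat -> a p = 4%nat -> a (p + 1)%Z = 4%nat -> lambda0 (shiftZ p a) <= 9/2.
Proof.
  intros Ha Hl Hp Hr; rewrite lambda0_unfold, Hp by exact Ha.
  pose proof (inv_cf_le_inv_head _ (positive_fwd a (p + 1) Ha)) as Hf.
  pose proof (inv_cf_le_inv_head _ (positive_bwd a p Ha)) as Hb.
  rewrite fwd_0, Hr in Hf; rewrite bwd_0, Hl in Hb; simpl in *; lra.
Qed.

Lemma lambda0_le_43 a p : positiveZ a ->
  a (p - 1)%Z = 4%nat -> a p = 3%nat -> lambda0 (shiftZ p a) <= 9/2.
Proof.
  intros Ha Hl Hp; rewrite lambda0_unfold, Hp by exact Ha.
  pose proof (inv_cf_bounds _ (positive_fwd a (p + 1) Ha)).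
  pose proof (inv_cf_le_inv_head _ (positive_bwd a p Ha)) as Hb.
  rewrite bwd_0, Hl in Hb; simpl in *; lra.
Qed.

Lemma lambda0_le_21312 a p : positiveZ a ->
  a (p - 2)%Z = 2%nat -> a (p - 1)%Z = 1%nat -> a p = 3%nat ->
  a (p + 1)%Z = 1%nat -> a (p + 2)%Z = 2%nat -> lambda0 (shiftZ p a) <= 9/2.
Proof.
  intros Ha Hl2 Hl1 Hp Hr1 Hr2; rewrite lambda0_unfold, Hp by exact Ha.
  assert (/ cf (fwd a (p + 1)) <= 3/4).
  { apply inv_cf_le_3_4; [apply positive_fwd, Ha| |];
      rewrite ?fwd_0, ?fwd_1, ?Hr1; [reflexivity|].
    replace (p + 1 + 1)%Z with (p + 2)%Z by lia; rewrite Hr2; lia. }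
  assert (/ cf (bwd a p) <= 3/4).
  { apply inv_cf_le_3_4; [apply positive_bwd, Ha|rewrite bwd_0; exact Hl1|].
    rewrite bwd_1, Hl2; lia. }
  simpl; lra.
Qed.

(** * The two identities *)

Lemma nth_positive (l : list nat) i :
  List.Forall (fun x => (0 < x)%nat) l -> (0 < nth i l 1%nat)%nat.
Proof.
  intros Hl; destruct (nth_in_or_default i l 1%nat) as [Hin | ->]; [|lia].
  exact (proj1 (List.Forall_forall _ l) Hl _ Hin).
Qed.

Ltac positive_nth := apply nth_positive; repeat constructor.

Lemma positive_all4 : positive_seq all4.
Proof. intros k; unfold all4; lia. Qed.

Lemma positive_s3_1312 : positive_seq s3_1312.
Proof. intros [|k]; [simpl; lia|unfold s3_1312; positive_nth]. Qed.

Lemma positive_s313_4 : positive_seq s313_4.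
Proof. intros [|[|[|k]]]; simpl; lia. Qed.

Lemma positive_s1213 : positive_seq s1213.
Proof. intros k; unfold s1213; positive_nth. Qed.

Lemma cf_unfold4 a : positive_seq a ->
  cf a = INR (a 0%nat) + / (INR (a 1%nat) + / (INR (a 2%nat) + / (INR (a 3%nat) +
           / cf (stail (stail (stail (stail a))))))).
Proof.
  intros Ha; pose proof (positive_stail _ Ha) as Ha1.
  pose proof (positive_stail _ Ha1) as Ha2; pose proof (positive_stail _ Ha2) as Ha3.
  rewrite (cf_unfold a), (cf_unfold (stail a)), (cf_unfold (stail (stail a))),
    (cf_unfold (stail (stail (stail a)))) by assumption.
  reflexivity.
Qed.

Lemma mod4_add4 k : ((4 + k) mod 4 = k mod 4)%nat.
Proof. rewrite Nat.add_comm; apply (Nat.Div0.mod_add k 1 4). Qed.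

Lemma sqrt5_sq : sqrt 5 * sqrt 5 = 5.
Proof. apply sqrt_sqrt; lra. Qed.

Lemma sqrt5_bounds : 2 < sqrt 5 < 3.
Proof. pose proof sqrt5_sq; pose proof (sqrt_pos 5); nra. Qed.

Lemma eq_root_of_quadratic y r r' : (y - r) * (y - r') = 0 -> r' < y -> y = r.
Proof. intros E H; apply Rmult_integral in E; lra. Qed.

Lemma cf_all4 : cf all4 = 2 + sqrt 5.
Proof.
  pose proof (cf_unfold all4 positive_all4) as E; change (stail all4) with all4 in E.
  pose proof (cf_ge_1 all4 positive_all4); pose proof sqrt5_sq; pose proof sqrt5_bounds.
  set (x := cf all4) in *; simpl in E.
  assert (Ex : x * x = 4 * x + 1) by (rewrite E at 1; field; lra).
  apply (eq_root_of_quadratic x _ (2 - sqrt 5)); lra.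
Qed.

Lemma cf_stail_s3_1312 : cf (stail s3_1312) = (5 + 4 * sqrt 5) / 11.
Proof.
  pose proof (positive_stail _ positive_s3_1312) as Hp.
  pose proof (cf_unfold4 _ Hp) as E.
  replace (stail (stail (stail (stail (stail s3_1312))))) with (stail s3_1312) in E
    by (apply functional_extensionality; intros k; unfold stail, s3_1312;
        now rewrite <- mod4_add4).
  pose proof (cf_ge_1 _ Hp); pose proof sqrt5_sq; pose proof sqrt5_bounds.
  set (x := cf (stail s3_1312)) in *; simpl in E.
  assert (Ex : x * (11 * x + 4) = 14 * x + 5) by (rewrite E at 1; field; repeat split; lra).
  apply (eq_root_of_quadratic x _ ((5 - 4 * sqrt 5) / 11)); lra.
Qed.

Lemma cf_s1213 : cf s1213 = (6 + 4 * sqrt 5) / 11.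
Proof.
  pose proof (cf_unfold4 _ positive_s1213) as E.
  replace (stail (stail (stail (stail s1213)))) with s1213 in E
    by (apply functional_extensionality; intros k; unfold stail, s1213;
        now rewrite <- mod4_add4).
  pose proof (cf_ge_1 _ positive_s1213); pose proof sqrt5_sq; pose proof sqrt5_bounds.
  set (x := cf s1213) in *; simpl in E.
  assert (Ex : x * (11 * x + 3) = 15 * x + 4) by (rewrite E at 1; field; repeat split; lra).
  apply (eq_root_of_quadratic x _ ((6 - 4 * sqrt 5) / 11)); lra.
Qed.

Lemma cf_s313_4 : cf s313_4 = 6 - sqrt 5.
Proof.
  pose proof (positive_stail _ positive_s313_4) as Hp1.
  rewrite (cf_unfold _ positive_s313_4), (cf_unfold _ Hp1), (cf_unfold _ (positive_stail _ Hp1)).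
  change (stail (stail (stail s313_4))) with all4; rewrite cf_all4.
  pose proof sqrt5_sq; pose proof sqrt5_bounds; simpl.
  rewrite <- (Rmult_inv_r_uniq (2 + sqrt 5) (sqrt 5 - 2)) by nra.
  rewrite <- (Rmult_inv_r_uniq (1 + 1 + 1 + (sqrt 5 - 2)) ((sqrt 5 - 1) / 4)) by nra.
  rewrite <- (Rmult_inv_r_uniq (1 + (sqrt 5 - 1) / 4) (3 - sqrt 5)) by nra.
  ring.
Qed.

Lemma cf_all4_add_inv_cf_s3_1312 : cf all4 + / cf s3_1312 = 9 / 2.
Proof.
  rewrite (cf_unfold _ positive_s3_1312), cf_stail_s3_1312, cf_all4.
  pose proof sqrt5_sq; pose proof sqrt5_bounds; simpl.
  rewrite <- (Rmult_inv_r_uniq ((5 + 4 * sqrt 5) / 11) ((4 * sqrt 5 - 5) / 5)) by nra.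
  rewrite <- (Rmult_inv_r_uniq (1 + 1 + 1 + (4 * sqrt 5 - 5) / 5) ((10 - 4 * sqrt 5) / 4))
    by nra.
  field.
Qed.

Lemma cf_s313_4_add_inv_cf_s1213 : cf s313_4 + / cf s1213 = 9 / 2.
Proof.
  rewrite cf_s313_4, cf_s1213; pose proof sqrt5_sq; pose proof sqrt5_bounds.
  rewrite <- (Rmult_inv_r_uniq ((6 + 4 * sqrt 5) / 11) ((4 * sqrt 5 - 6) / 4)) by nra.
  field.
Qed.

(** * The sequence [...444 3 131213121312...] *)

Definition per1312 (m : Z) : nat := nth (Z.to_nat (m mod 4)) [1; 3; 1; 2]%nat 1%nat.

Lemma per1312_eq m m' : (m mod 4 = m' mod 4)%Z -> per1312 m = per1312 m'.
Proof. unfold per1312; intros ->; reflexivity. Qed.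

Lemma per1312_add4 m : per1312 (m + 4) = per1312 m.
Proof. apply per1312_eq; Z.div_mod_to_equations; lia. Qed.

Lemma per1312_cases m :
  ((m mod 4 = 0)%Z /\ per1312 m = 1%nat) \/ ((m mod 4 = 1)%Z /\ per1312 m = 3%nat) \/
  ((m mod 4 = 2)%Z /\ per1312 m = 1%nat) \/ ((m mod 4 = 3)%Z /\ per1312 m = 2%nat).
Proof.
  unfold per1312; pose proof (Z.mod_pos_bound m 4 ltac:(lia)).
  destruct (Z.eq_dec (m mod 4) 0) as [->|]; [now left|].
  destruct (Z.eq_dec (m mod 4) 1) as [->|]; [now right; left|].
  destruct (Z.eq_dec (m mod 4) 2) as [->|]; [now right; right; left|].
  replace (m mod 4)%Z with 3%Z by lia; now right; right; right.
Qed.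

Lemma per1312_reflect m : per1312 (2 - m) = per1312 m.
Proof.
  destruct (per1312_cases m) as [[Hm ->]|[[Hm ->]|[[Hm ->]|[Hm ->]]]];
  destruct (per1312_cases (2 - m)) as [[H ->]|[[H ->]|[[H ->]|[H ->]]]];
  Z.div_mod_to_equations; lia.
Qed.

Ltac eval_per1312 :=
  match goal with
  | |- context [per1312 ?m] =>
      destruct (per1312_cases m) as [[? ->]|[[? ->]|[[? ->]|[? ->]]]];
      try (exfalso; Z.div_mod_to_equations; lia)
  end.

Lemma eq_of_period4 (u v : nat -> nat) :
  (forall k, u (4 + k)%nat = u k) -> (forall k, v (4 + k)%nat = v k) ->
  (forall k, (k < 4)%nat -> u k = v k) -> forall k, u k = v k.
Proof.
  intros Hu Hv H0 k; induction k as [k IH] using lt_wf_ind.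
  destruct (Nat.lt_ge_cases k 4) as [Hk|Hk]; [now apply H0|].
  replace k with (4 + (k - 4))%nat by lia; rewrite Hu, Hv; apply IH; lia.
Qed.

Lemma s3_1312_S j : s3_1312 (S j) = per1312 (Z.of_nat j).
Proof.
  revert j; apply (eq_of_period4 (fun j => s3_1312 (S j)) (fun j => per1312 (Z.of_nat j))).
  - intros k; unfold s3_1312; now rewrite mod4_add4.
  - intros k; rewrite <- (per1312_add4 (Z.of_nat k)); f_equal; lia.
  - intros [|[|[|[|k]]]] Hk; reflexivity || lia.
Qed.

Lemma s1213_per1312 k : s1213 k = per1312 (Z.of_nat k + 2).
Proof.
  revert k; apply eq_of_period4.
  - intros k; unfold s1213; now rewrite mod4_add4.
  - intros k; rewrite <- (per1312_add4 (Z.of_nat k + 2)); f_equal; lia.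
  - intros [|[|[|[|k]]]] Hk; reflexivity || lia.
Qed.

Lemma seq43_neg i : (i < 0)%Z -> seq43 i = 4%nat.
Proof. intros Hi; unfold seq43; destruct (Z.ltb_spec i 0); lia. Qed.

Lemma seq43_pos i : (0 < i)%Z -> seq43 i = per1312 (i - 1).
Proof.
  intros Hi; unfold seq43; destruct (Z.ltb_spec i 0), (Z.eqb_spec i 0); lia || reflexivity.
Qed.

Lemma positive_seq43 : positiveZ seq43.
Proof.
  intros i; unfold seq43; destruct (i <? 0)%Z, (i =? 0)%Z; try lia; positive_nth.
Qed.

Lemma positive_seq43_reflect : positiveZ (fun i => seq43 (- i)).
Proof. intros i; apply positive_seq43. Qed.

Lemma lambda0_seq43_m1 : lambda0 (shiftZ (-1) seq43) = 9 / 2.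
Proof.
  rewrite lambda0_unfold, seq43_neg by (apply positive_seq43 || lia).
  replace (fwd seq43 (-1 + 1)) with s3_1312.
  2: { apply functional_extensionality; intros [|j]; [reflexivity|].
       unfold fwd; rewrite seq43_pos, s3_1312_S by lia; f_equal; lia. }
  replace (bwd seq43 (-1)) with all4.
  2: { apply functional_extensionality; intros k; unfold bwd; rewrite seq43_neg by lia;
       reflexivity. }
  rewrite <- cf_all4_add_inv_cf_s3_1312; rewrite (cf_unfold all4 positive_all4) at 2.
  change (stail all4) with all4; change (all4 0%nat) with 4%nat; ring.
Qed.

Lemma lambda0_seq43_2 : lambda0 (shiftZ 2 seq43) = 9 / 2.
Proof.
  rewrite lambda0_unfold, seq43_pos by (apply positive_seq43 || lia); simpl per1312.
  replace (fwd seq43 (2 + 1)) with s1213.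
  2: { apply functional_extensionality; intros k.
       unfold fwd; rewrite seq43_pos, s1213_per1312 by lia; f_equal; lia. }
  replace (bwd seq43 2) with (stail s313_4).
  2: { apply functional_extensionality; intros [|[|k]]; [reflexivity|reflexivity|].
       unfold bwd; rewrite seq43_neg by lia; reflexivity. }
  rewrite <- cf_s313_4_add_inv_cf_s1213, (cf_unfold s313_4 positive_s313_4); simpl; ring.
Qed.

Lemma lambda0_seq43_le p : lambda0 (shiftZ p seq43) <= 9 / 2.
Proof.
  pose proof positive_seq43 as Hpos.
  destruct (Z.lt_trichotomy p (-1)) as [Hp|[->|Hp]].
  - apply lambda0_le_444; auto; apply seq43_neg; lia.
  - rewrite lambda0_seq43_m1; lra.
  - destruct (Z.eq_dec p 0) as [->|Hp0].
    { apply lambda0_le_43; auto. }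
    destruct (per1312_cases (p - 1)) as [[Hm Hv]|[[Hm Hv]|[[Hm Hv]|[Hm Hv]]]];
      try (eapply Rle_trans; [apply lambda0_le_head; auto|];
           rewrite seq43_pos, Hv by lia; simpl; lra).
    destruct (Z.eq_dec p 2) as [->|Hp2]; [rewrite lambda0_seq43_2; lra|].
    assert (6 <= p)%Z by (Z.div_mod_to_equations; lia).
    apply lambda0_le_21312; auto; rewrite seq43_pos by lia; eval_per1312; reflexivity.
Qed.

Lemma lambda0_seq43_reflect_le q : lambda0 (shiftZ q (fun i => seq43 (- i))) <= 9 / 2.
Proof.
  replace q with (- - q)%Z by lia.
  rewrite lambda0_reflect by exact positive_seq43; apply lambda0_seq43_le.
Qed.

Lemma mval_seq43 : mval seq43 = Finite (9 / 2).
Proof.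
  destruct (mval_between seq43 (9 / 2) (9 / 2) (-1) lambda0_seq43_le
    ltac:(rewrite lambda0_seq43_m1; lra)) as [v [-> Hv]].
  f_equal; lra.
Qed.

(** * Blocks [4^n 3 (1312)^n 1313] *)

Lemma length_concat_1312 n : length (concat (repeat [1; 3; 1; 2]%nat n)) = (4 * n)%nat.
Proof. induction n as [|n IH]; simpl; [reflexivity|rewrite IH; lia]. Qed.

Lemma length_block n : length (block n) = (5 * n + 5)%nat.
Proof. unfold block; rewrite !length_app, repeat_length, length_concat_1312; simpl; lia. Qed.

Lemma nth_concat_1312 n i : (i < 4 * n)%nat ->
  nth i (concat (repeat [1; 3; 1; 2]%nat n)) 1%nat = per1312 (Z.of_nat i).
Proof.
  revert i; induction n as [|n IH]; intros i Hi; [lia|].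
  change (concat (repeat [1; 3; 1; 2]%nat (S n)))
    with ([1; 3; 1; 2]%nat ++ concat (repeat [1; 3; 1; 2]%nat n)).
  destruct (Nat.lt_ge_cases i 4) as [Hi4|Hi4].
  - rewrite app_nth1 by (simpl; lia).
    destruct i as [|[|[|[|]]]]; reflexivity || lia.
  - rewrite app_nth2, IH by (simpl; lia); simpl length.
    rewrite <- per1312_add4; f_equal; lia.
Qed.

Lemma Forall_repeat {A : Type} (P : A -> Prop) x m : P x -> List.Forall P (repeat x m).
Proof.
  intros Hx; apply List.Forall_forall; intros y Hy; apply repeat_spec in Hy; subst y; exact Hx.
Qed.

Lemma block_bounded n : List.Forall (fun x => (0 < x <= 4)%nat) (block n).
Proof.
  unfold block; rewrite !List.Forall_app, List.Forall_concat.
  repeat split; repeat (apply Forall_repeat || constructor); lia.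
Qed.

Lemma nth_block_bounds n i : (0 < nth i (block n) 1%nat <= 4)%nat.
Proof.
  destruct (nth_in_or_default i (block n) 1%nat) as [Hin | ->]; [|lia].
  exact (proj1 (List.Forall_forall _ _) (block_bounded n) _ Hin).
Qed.

Lemma nth_block_4 n i : (i < n)%nat -> nth i (block n) 1%nat = 4%nat.
Proof. intros Hi; unfold block; rewrite app_nth1, nth_repeat_lt; rewrite ?repeat_length; lia. Qed.

Lemma nth_block_3 n : nth n (block n) 1%nat = 3%nat.
Proof.
  unfold block; rewrite app_nth2 by (rewrite repeat_length; lia).
  rewrite repeat_length, Nat.sub_diag; reflexivity.
Qed.

Lemma nth_block_1312 n i : (n < i <= 5 * n)%nat ->
  nth i (block n) 1%nat = per1312 (Z.of_nat i - Z.of_nat n - 1).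
Proof.
  intros Hi; unfold block; rewrite app_nth2 by (rewrite repeat_length; lia).
  rewrite repeat_length; replace (i - n)%nat with (S (i - n - 1)) by lia; simpl.
  rewrite app_nth1, nth_concat_1312 by (rewrite ?length_concat_1312; lia).
  f_equal; lia.
Qed.

Lemma nth_block_1313 n j : (j < 4)%nat ->
  nth (5 * n + 1 + j) (block n) 1%nat = nth j [1; 3; 1; 3]%nat 1%nat.
Proof.
  intros Hj; unfold block; rewrite app_nth2 by (rewrite repeat_length; lia).
  rewrite repeat_length; replace (5 * n + 1 + j - n)%nat with (S (4 * n + j)) by lia; simpl.
  rewrite app_nth2, length_concat_1312 by (rewrite length_concat_1312; lia).
  match goal with |- nth ?m _ _ = _ => replace m with j by lia end; reflexivity.
Qed.

Definition block_at (a : Z -> nat) (s : Z) (n : nat) : Prop :=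
  forall i, (i < 5 * n + 5)%nat -> a (s + Z.of_nat i)%Z = nth i (block n) 1%nat.

Lemma block_at_seq43 a s n : block_at a s n ->
  forall j, (- Z.of_nat n <= j <= 4 * Z.of_nat n)%Z -> a (s + Z.of_nat n + j)%Z = seq43 j.
Proof.
  intros Hb j Hj.
  replace (s + Z.of_nat n + j)%Z with (s + Z.of_nat (Z.to_nat (Z.of_nat n + j)))%Z by lia.
  rewrite Hb by lia.
  destruct (Z.lt_trichotomy j 0) as [Hj0|[->|Hj0]].
  - rewrite nth_block_4, seq43_neg by lia; reflexivity.
  - replace (Z.to_nat (Z.of_nat n + 0)) with n by lia; apply nth_block_3.
  - rewrite nth_block_1312, seq43_pos by lia; f_equal; lia.
Qed.

Lemma block_at_seq43_reflect a s n n' :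
  block_at a s n -> block_at a (s + Z.of_nat (5 * n + 5)) n' ->
  forall j, (- 4 * Z.of_nat n - 3 <= j <= Z.of_nat n')%Z ->
  a (s + Z.of_nat (5 * n + 4) + j)%Z = seq43 (- j).
Proof.
  intros Hb Hb' j Hj.
  destruct (Z_lt_le_dec 0 j) as [Hpos|Hnpos].
  - replace (s + Z.of_nat (5 * n + 4) + j)%Z
      with (s + Z.of_nat (5 * n + 5) + Z.of_nat (Z.to_nat (j - 1)))%Z by lia.
    rewrite Hb', nth_block_4, seq43_neg by lia; reflexivity.
  - replace (s + Z.of_nat (5 * n + 4) + j)%Z
      with (s + Z.of_nat (Z.to_nat (Z.of_nat (5 * n + 4) + j)))%Z by lia.
    rewrite Hb by lia.
    destruct (Z_lt_le_dec j (-3)) as [Hmid|Hend].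
    + rewrite nth_block_1312, seq43_pos by lia.
      rewrite <- per1312_reflect; apply per1312_eq; Z.div_mod_to_equations; lia.
    + replace (Z.to_nat (Z.of_nat (5 * n + 4) + j)) with (5 * n + 1 + Z.to_nat (3 + j))%nat
        by lia.
      rewrite nth_block_1313 by lia.
      assert (j = -3 \/ j = -2 \/ j = -1 \/ j = 0)%Z as [-> | [-> | [-> | ->]]] by lia;
        reflexivity.
Qed.

(* Every position of the middle block sees, within distance [K + 1], either
   [seq43] or its reflection. *)
Lemma lambda0_le_in_block K a s n1 n2 n3 p : positiveZ a ->
  block_at a (s - Z.of_nat (5 * n1 + 5)) n1 -> block_at a s n2 ->
  block_at a (s + Z.of_nat (5 * n2 + 5)) n3 ->
  (K <= n1)%nat -> (2 * K + 1 <= n2)%nat -> (K <= n3)%nat ->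
  (s <= p < s + Z.of_nat (5 * n2 + 5))%Z ->
  lambda0 (shiftZ p a) <= 9 / 2 + 4 * (1/2) ^ K.
Proof.
  intros Ha Hb1 Hb2 Hb3 HK1 HK2 HK3 Hp.
  destruct (Z_le_gt_dec p (s + Z.of_nat n2 - Z.of_nat K - 1)) as [Hstart|Hstart].
  { pose proof (block_at_seq43_reflect a _ n1 n2 Hb1
      ltac:(now replace (s - Z.of_nat (5 * n1 + 5) + Z.of_nat (5 * n1 + 5))%Z with s
              by lia)) as Hagree.
    set (c := (s - Z.of_nat (5 * n1 + 5) + Z.of_nat (5 * n1 + 4))%Z) in Hagree.
    replace p with (c + (p - c))%Z by lia.
    apply (lambda0_le_of_agree K a _ c _ _ _ _ Ha positive_seq43_reflect Hagree);
      [lia|lia|apply lambda0_seq43_reflect_le]. }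
  destruct (Z_le_gt_dec p (s + 5 * Z.of_nat n2 - Z.of_nat K)) as [Hmid|Hend].
  { pose proof (block_at_seq43 a s n2 Hb2) as Hagree.
    replace p with (s + Z.of_nat n2 + (p - s - Z.of_nat n2))%Z by lia.
    apply (lambda0_le_of_agree K a _ _ _ _ _ _ Ha positive_seq43 Hagree);
      [lia|lia|apply lambda0_seq43_le]. }
  pose proof (block_at_seq43_reflect a s n2 n3 Hb2 Hb3) as Hagree.
  replace p with (s + Z.of_nat (5 * n2 + 4) + (p - s - Z.of_nat (5 * n2 + 4)))%Z by lia.
  apply (lambda0_le_of_agree K a _ _ _ _ _ _ Ha positive_seq43_reflect Hagree);
    [lia|lia|apply lambda0_seq43_reflect_le].
Qed.

Lemma lambda0_ge_in_block K a s n : positiveZ a -> block_at a s n -> (K + 1 <= n)%nat ->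
  9 / 2 - 4 * (1/2) ^ K <= lambda0 (shiftZ (s + Z.of_nat n + 2) a).
Proof.
  intros Ha Hb HK.
  apply (lambda0_ge_of_agree K a _ _ _ _ _ _ Ha positive_seq43 (block_at_seq43 a s n Hb));
    [lia|lia|rewrite lambda0_seq43_2; lra].
Qed.

(** * Markov values of the periodic sequences *)

Lemma geometric_error_small eps : 0 < eps -> exists K, 4 * (1/2) ^ K < eps.
Proof.
  intros Heps.
  destruct (pow_lt_1_zero (1/2) ltac:(rewrite Rabs_pos_eq; lra) (eps / 4) ltac:(lra)) as [K HK].
  exists K; specialize (HK K (le_n K)).
  rewrite Rabs_pos_eq in HK by (apply pow_le; lra); lra.
Qed.

Lemma positive_periodic_block n : positiveZ (periodic (block n)).
Proof. intros i; apply nth_block_bounds. Qed.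

Lemma periodic_block_at n k : block_at (periodic (block n)) (k * Z.of_nat (5 * n + 5)) n.
Proof.
  intros i Hi; unfold periodic; rewrite length_block.
  rewrite Z.add_comm, Z.mod_add, Z.mod_small, Nat2Z.id by lia; reflexivity.
Qed.

Lemma lambda0_periodic_block_le K n p : (2 * K + 1 <= n)%nat ->
  lambda0 (shiftZ p (periodic (block n))) <= 9 / 2 + 4 * (1/2) ^ K.
Proof.
  intros HK; set (L := Z.of_nat (5 * n + 5)).
  pose proof (Z.div_mod p L ltac:(lia)); pose proof (Z.mod_pos_bound p L ltac:(lia)).
  apply (lambda0_le_in_block K _ ((p / L) * L) n n n); try lia.
  - apply positive_periodic_block.
  - fold L; replace (p / L * L - L)%Z with ((p / L - 1) * L)%Z by ring.
    apply periodic_block_at.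
  - apply periodic_block_at.
  - fold L; replace (p / L * L + L)%Z with ((p / L + 1) * L)%Z by ring.
    apply periodic_block_at.
Qed.

Lemma lambda0_periodic_block_ge K n : (K + 1 <= n)%nat ->
  9 / 2 - 4 * (1/2) ^ K <= lambda0 (shiftZ (Z.of_nat n + 2) (periodic (block n))).
Proof.
  intros HK; apply (lambda0_ge_in_block K _ 0 n (positive_periodic_block n)
    (periodic_block_at n 0) HK).
Qed.

Lemma mval_periodic_block_finite n : exists v, mval (periodic (block n)) = Finite v.
Proof.
  destruct (mval_between (periodic (block n)) 0 6 0) as [v [Hv _]].
  - intros p; eapply Rle_trans; [apply lambda0_le_head, positive_periodic_block|].
    pose proof (nth_block_bounds n (Z.to_nat (p mod Z.of_nat (length (block n))))) as [_ H].
    apply le_INR in H; unfold periodic; simpl in *; lra.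
  - rewrite lambda0_shiftZ; pose proof (cf_ge_1 _ (positive_fwd _ 0 (positive_periodic_block n))).
    pose proof (inv_cf_bounds _ (positive_bwd _ 0 (positive_periodic_block n))); lra.
  - now exists v.
Qed.

Lemma mval_periodic_block_lim : exists v : nat -> R,
  (forall n, mval (periodic (block n)) = Finite (v n)) /\ is_lim_seq v (9 / 2).
Proof.
  exists (fun n => real (mval (periodic (block n)))); split.
  - intros n; destruct (mval_periodic_block_finite n) as [v ->]; reflexivity.
  - apply is_lim_seq_spec; intros eps.
    destruct (geometric_error_small eps (cond_pos eps)) as [K HK].
    exists (2 * K + 1)%nat; intros n Hn.
    destruct (mval_between (periodic (block n)) _ _ _
      (fun p => lambda0_periodic_block_le K n p ltac:(lia))
      (lambda0_periodic_block_ge K n ltac:(lia))) as [v [-> Hv]].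
    simpl; apply Rabs_def1; lra.
Qed.

(** * A sequence with Lagrange value 9/2 *)

Definition blocks_upto (m : nat) : list nat := concat (map block (seq 0 m)).

(* The concatenation [block 0 ++ block 1 ++ ...]: the prefix of [S z] blocks
   already has length [> z]. Negative positions, irrelevant for the limsup,
   are clamped to [0]. *)
Definition blocks_seq (z : Z) : nat := nth (Z.to_nat z) (blocks_upto (S (Z.to_nat z))) 1%nat.

Lemma blocks_upto_S b : blocks_upto (S b) = blocks_upto b ++ block b.
Proof. unfold blocks_upto; rewrite seq_S, map_app, concat_app; simpl; now rewrite app_nil_r. Qed.

Lemma length_blocks_upto_S b :
  length (blocks_upto (S b)) = (length (blocks_upto b) + (5 * b + 5))%nat.
Proof. rewrite blocks_upto_S, length_app, length_block; reflexivity. Qed.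

Lemma length_blocks_upto_mono b b' : (b <= b')%nat ->
  (length (blocks_upto b) <= length (blocks_upto b'))%nat.
Proof. induction 1 as [|b' _ IH]; [lia|rewrite length_blocks_upto_S; lia]. Qed.

Lemma length_blocks_upto_ge b : (b <= length (blocks_upto b))%nat.
Proof. induction b as [|b IH]; [simpl; lia|rewrite length_blocks_upto_S; lia]. Qed.

Lemma blocks_upto_app b m : (b < m)%nat ->
  exists rest, blocks_upto m = blocks_upto b ++ block b ++ rest.
Proof.
  induction 1 as [|m Hbm [rest IH]].
  - exists []; rewrite blocks_upto_S, app_nil_r; reflexivity.
  - exists (rest ++ block m); rewrite blocks_upto_S, IH, !app_assoc; reflexivity.
Qed.

Lemma blocks_upto_cover n : exists b,
  (length (blocks_upto b) <= n < length (blocks_upto (S b)))%nat.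
Proof.
  induction n as [|n [b Hb]].
  - exists 0%nat; rewrite length_blocks_upto_S; simpl; lia.
  - destruct (Nat.eq_dec (S n) (length (blocks_upto (S b)))) as [E|E].
    + exists (S b); rewrite (length_blocks_upto_S (S b)); lia.
    + exists b; lia.
Qed.

Lemma positive_blocks_seq : positiveZ blocks_seq.
Proof.
  intros z; unfold blocks_seq.
  destruct (nth_in_or_default (Z.to_nat z) (blocks_upto (S (Z.to_nat z))) 1%nat)
    as [Hin | ->]; [|lia].
  unfold blocks_upto in Hin; apply in_concat in Hin as [l [Hl Hin]].
  apply in_map_iff in Hl as [b [<- _]].
  exact (proj1 (proj1 (List.Forall_forall _ _) (block_bounded b) _ Hin)).
Qed.

Lemma blocks_seq_block_at b : block_at blocks_seq (Z.of_nat (length (blocks_upto b))) b.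
Proof.
  intros i Hi; unfold blocks_seq.
  rewrite <- Nat2Z.inj_add, Nat2Z.id.
  destruct (blocks_upto_app b (S (length (blocks_upto b) + i)))
    as [rest ->]; [pose proof (length_blocks_upto_ge b); lia|].
  rewrite app_nth2, Nat.add_comm, Nat.add_sub, app_nth1 by (rewrite ?length_block; lia).
  reflexivity.
Qed.

Lemma limsup_lambda0_blocks_seq :
  LimSup_seq (fun n => lambda0 (shiftZ (Z.of_nat n) blocks_seq)) = Finite (9 / 2).
Proof.
  apply is_LimSup_seq_unique; intros eps.
  destruct (geometric_error_small eps (cond_pos eps)) as [K HK].
  split.
  - intros N; set (b := (N + K + 1)%nat).
    exists (length (blocks_upto b) + b + 2)%nat; split.
    { pose proof (length_blocks_upto_ge b); lia. }
    pose proof (lambda0_ge_in_block K blocks_seq _ b positive_blocks_seq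
      (blocks_seq_block_at b) ltac:(lia)) as Hge.
    replace (Z.of_nat (length (blocks_upto b) + b + 2))
      with (Z.of_nat (length (blocks_upto b)) + Z.of_nat b + 2)%Z by lia; lra.
  - exists (length (blocks_upto (2 * K + 2))); intros n Hn.
    destruct (blocks_upto_cover n) as [b Hb]; rewrite length_blocks_upto_S in Hb.
    assert (HbK : (2 * K + 2 <= b)%nat).
    { destruct (Nat.le_gt_cases (2 * K + 2) b) as [|Hlt]; [assumption|].
      pose proof (length_blocks_upto_mono (S b) (2 * K + 2) Hlt).
      pose proof (length_blocks_upto_S b); lia. }
    apply Rle_lt_trans with (9 / 2 + 4 * (1/2) ^ K); [|lra].
    apply (lambda0_le_in_block K blocks_seq (Z.of_nat (length (blocks_upto b))) (b - 1) b (S b));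
      try apply blocks_seq_block_at; try lia.
    + apply positive_blocks_seq.
    + replace (Z.of_nat (length (blocks_upto b)) - Z.of_nat (5 * (b - 1) + 5))%Z
        with (Z.of_nat (length (blocks_upto (b - 1)))); [apply blocks_seq_block_at|].
      pose proof (length_blocks_upto_S (b - 1)) as Hlen.
      replace (S (b - 1)) with b in Hlen by lia; lia.
    + replace (Z.of_nat (length (blocks_upto b)) + Z.of_nat (5 * b + 5))%Z
        with (Z.of_nat (length (blocks_upto (S b)))); [apply blocks_seq_block_at|].
      rewrite length_blocks_upto_S; lia.
Qed.

Lemma lagrange_9_2 : in_Lagrange (9 / 2).
Proof.
  exists blocks_seq; split; [apply positive_blocks_seq|apply limsup_lambda0_blocks_seq].
Qed.

Theorem lemma3p9 :
  (* [4; 4bar] + [0; 3, (1,3,1,2)bar] = 9/2 *)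
  cf all4 + / cf s3_1312 = 9 / 2 /\
  (* [3; 1, 3, 4bar] + [0; (1,2,1,3)bar] = 9/2 *)
  cf s313_4 + / cf s1213 = 9 / 2 /\
  (* 9/2 = m(4bar 3 (1312)bar) *)
  mval seq43 = Finite (9 / 2) /\
  (* 9/2 = lim_n m( (4^n 3 (1312)^n 1313)bar ) *)
  (exists v : nat -> R,
      (forall n, mval (periodic (block n)) = Finite (v n)) /\
      is_lim_seq v (9 / 2)) /\
  (* 9/2 in L cap Q *)
  in_Lagrange (9 / 2) /\
  (exists p q : Z, q <> 0%Z /\ 9 / 2 = IZR p / IZR q).
Proof.
  split; [exact cf_all4_add_inv_cf_s3_1312|].
  split; [exact cf_s313_4_add_inv_cf_s1213|].
  split; [exact mval_seq43|].
  split; [exact mval_periodic_block_lim|].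
  split; [exact lagrange_9_2|].
  exists 9%Z, 2%Z; split; [discriminate|reflexivity].
Qed.
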